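(* Let $\mathcal K$ be a variety of WHB-algebras that has a tense companion $\mathcal N$. Then $\mathcal K$ has the amalgamation property if and only if $\mathcal N$ has the amalgamation property.
   Context: A WHB-algebra is an algebra $(A,\wedge,\vee,\to,\leftarrow,0,1)$ such that $(A,\wedge,\vee,0,1)$ is a bounded distributive lattice and for all $a,b,c\in A$: $a\to a=1$; $a\to(b\wedge c)=(a\to b)\wedge(a\to c)$; $(a\vee b)\to c=(a\to c)\wedge(b\to c)$; $(a\to b)\wedge(b\to c)\le a\to c$; $a\leftarrow a=0$; $(a\vee b)\leftarrow c=(a\leftarrow c)\vee(b\leftarrow c)$; $a\leftarrow(b\wedge c)=(a\leftarrow b)\vee(a\leftarrow c)$; $a\leftarrow c\le(a\leftarrow b)\vee(b\leftarrow c)$; $a\wedge((a\to b)\leftarrow 0)\le b$; $a\le b\vee(1\to(a\leftarrow b))$. A tense algebra is $(\mathbf B,G,H)$ with $\mathbf B$ a Boolean algebra and unary $G,H$ such that, with $P(x)=\neg H(\neg x)$, $F(x)=\neg G(\neg x)$: $P(x)\le y\iff x\le G(y)$ and $F(x)\le y\iff x\le H(y)$. $M(\mathbf B,G,H)$ is the WHB-algebra on $B$ with $x\to y=G(\neg x\vee y)$, $x\leftarrow y=P(x\wedge\neg y)$. For a WHB-algebra $\mathbf A$: $X(\mathbf A)$ is its set of prime filters, $\sigma_{\mathbf A}(a)=\{P\colon a\in P\}$, $\tau_{\mathbf A}$ the topology with subbase $\{\sigma_{\mathbf A}(a)\}\cup\{X(\mathbf A)\setminus\sigma_{\mathbf A}(a)\}$;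 $(P,Q)\in R_{\mathbf A}$ iff for all $a,b$ ($a\to b\in P$, $a\in Q$ imply $b\in Q$); $(P,Q)\in S_{\mathbf A}$ iff for all $a,b$ ($a\in Q$, $b\notin Q$ imply $a\leftarrow b\in P$); $T(\mathbf A)$ is the Boolean algebra of $\tau_{\mathbf A}$-clopen subsets of $X(\mathbf A)$ with $G_{\mathbf A}(U)=\{P\colon R_{\mathbf A}(P)\subseteq U\}$, $H_{\mathbf A}(U)=\{P\colon S_{\mathbf A}(P)\subseteq U\}$. A variety $\mathcal N$ of tense algebras is a tense companion of a variety $\mathcal K$ of WHB-algebras if $T(\mathbf A)\in\mathcal N$ for all $\mathbf A\in\mathcal K$ and $M(\mathbf B)\in\mathcal K$ for all $\mathbf B\in\mathcal N$. A variety $\mathcal V$ has the amalgamation property if for all $\mathbf A,\mathbf B,\mathbf C\in\mathcal V$ and injective homomorphisms $i\colon\mathbf A\to\mathbf B$, $j\colon\mathbf A\to\mathbf C$ there are $\mathbf D\in\mathcal V$ and injective homomorphisms $h\colon\mathbf B\to\mathbf D$, $k\colon\mathbf C\to\mathbf D$ with $hi=kj$. *)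

From Stdlib Require Import List ClassicalEpsilon.
Import ListNotations.

Record WSig := {
  wcar :> Type;
  wmeet : wcar -> wcar -> wcar;
  wjoin : wcar -> wcar -> wcar;
  wimp : wcar -> wcar -> wcar;
  wcoimp : wcar -> wcar -> wcar;
  wzero : wcar;
  wone : wcar }.

Record TSig := {
  tcar :> Type;
  tmeet : tcar -> tcar -> tcar;
  tjoin : tcar -> tcar -> tcar;
  tneg : tcar -> tcar;
  tzero : tcar;
  tone : tcar;
  tG : tcar -> tcar;
  tH : tcar -> tcar }.

Definition is_bdl {T : Type} (meet join : T -> T -> T) (zero one : T) : Prop :=
  (forall a b c, meet a (meet b c) = meet (meet a b) c) /\
  (forall a b c, join a (join b c) = join (join a b) c) /\
  (forall a b, meet a b = meet b a) /\
  (forall a b, join a b = join b a) /\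
  (forall a b, meet a (join a b) = a) /\
  (forall a b, join a (meet a b) = a) /\
  (forall a b c, meet a (join b c) = join (meet a b) (meet a c)) /\
  (forall a, meet a one = a) /\
  (forall a, join a zero = a).

Definition wle (A : WSig) (a b : A) : Prop := wmeet A a b = a.

Definition is_WHB (A : WSig) : Prop :=
  is_bdl (wmeet A) (wjoin A) (wzero A) (wone A) /\
  (forall a, wimp A a a = wone A) /\
  (forall a b c, wimp A a (wmeet A b c) = wmeet A (wimp A a b) (wimp A a c)) /\
  (forall a b c, wimp A (wjoin A a b) c = wmeet A (wimp A a c) (wimp A b c)) /\
  (forall a b c, wle A (wmeet A (wimp A a b) (wimp A b c)) (wimp A a c)) /\
  (forall a, wcoimp A a a = wzero A) /\
  (forall a b c, wcoimp A (wjoin A a b) c = wjoin A (wcoimp A a c) (wcoimp A b c)) /\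
  (forall a b c, wcoimp A a (wmeet A b c) = wjoin A (wcoimp A a b) (wcoimp A a c)) /\
  (forall a b c, wle A (wcoimp A a c) (wjoin A (wcoimp A a b) (wcoimp A b c))) /\
  (forall a b, wle A (wmeet A a (wcoimp A (wimp A a b) (wzero A))) b) /\
  (forall a b, wle A a (wjoin A b (wimp A (wone A) (wcoimp A a b)))).

Definition tle (B : TSig) (a b : B) : Prop := tmeet B a b = a.
Definition tP (B : TSig) (x : B) : B := tneg B (tH B (tneg B x)).
Definition tF (B : TSig) (x : B) : B := tneg B (tG B (tneg B x)).

Definition is_tense (B : TSig) : Prop :=
  is_bdl (tmeet B) (tjoin B) (tzero B) (tone B) /\
  (forall a, tmeet B a (tneg B a) = tzero B) /\
  (forall a, tjoin B a (tneg B a) = tone B) /\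
  (forall x y, tle B (tP B x) y <-> tle B x (tG B y)) /\
  (forall x y, tle B (tF B x) y <-> tle B x (tH B y)).

Inductive wterm :=
  | wvar (n : nat)
  | wmeetT (t u : wterm) | wjoinT (t u : wterm)
  | wimpT (t u : wterm) | wcoimpT (t u : wterm)
  | wzeroT | woneT.

Fixpoint weval (A : WSig) (v : nat -> A) (t : wterm) : A :=
  match t with
  | wvar n => v n
  | wmeetT t u => wmeet A (weval A v t) (weval A v u)
  | wjoinT t u => wjoin A (weval A v t) (weval A v u)
  | wimpT t u => wimp A (weval A v t) (weval A v u)
  | wcoimpT t u => wcoimp A (weval A v t) (weval A v u)
  | wzeroT => wzero A
  | woneT => wone A
  end.

Inductive tterm :=
  | tvar (n : nat)
  | tmeetT (t u : tterm) | tjoinT (t u : tterm) | tnegT (t : tterm)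
  | tzeroT | toneT | tGT (t : tterm) | tHT (t : tterm).

Fixpoint teval (B : TSig) (v : nat -> B) (t : tterm) : B :=
  match t with
  | tvar n => v n
  | tmeetT t u => tmeet B (teval B v t) (teval B v u)
  | tjoinT t u => tjoin B (teval B v t) (teval B v u)
  | tnegT t => tneg B (teval B v t)
  | tzeroT => tzero B
  | toneT => tone B
  | tGT t => tG B (teval B v t)
  | tHT t => tH B (teval B v t)
  end.

Definition whb_variety (K : WSig -> Prop) : Prop :=
  exists E : wterm -> wterm -> Prop,
    forall A : WSig,
      K A <-> (is_WHB A /\
               forall t u, E t u -> forall v : nat -> A, weval A v t = weval A v u).

Definition tense_variety (N : TSig -> Prop) : Prop :=
  exists E : tterm -> tterm -> Prop,
    forall B : TSig,
      N B <-> (is_tense B /\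
               forall t u, E t u -> forall v : nat -> B, teval B v t = teval B v u).

Definition M (B : TSig) : WSig := {|
  wcar := B;
  wmeet := tmeet B;
  wjoin := tjoin B;
  wimp := fun x y => tG B (tjoin B (tneg B x) y);
  wcoimp := fun x y => tP B (tmeet B x (tneg B y));
  wzero := tzero B;
  wone := tone B |}.

Definition prime_filter (A : WSig) (F : A -> Prop) : Prop :=
  F (wone A) /\ ~ F (wzero A) /\
  (forall a b, F a -> F b -> F (wmeet A a b)) /\
  (forall a b, F a -> wle A a b -> F b) /\
  (forall a b, F (wjoin A a b) -> F a \/ F b).

Definition X (A : WSig) : Type := { F : A -> Prop | prime_filter A F }.

Definition sigma_ (A : WSig) (a : A) : X A -> Prop := fun P => proj1_sig P a.

Definition subb (A : WSig) (s : bool * A) : X A -> Prop :=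
  fun P => if fst s then sigma_ A (snd s) P else ~ sigma_ A (snd s) P.

Definition openA (A : WSig) (U : X A -> Prop) : Prop :=
  forall P, U P -> exists l : list (bool * A),
    (forall s, In s l -> subb A s P) /\
    (forall Q, (forall s, In s l -> subb A s Q) -> U Q).

Definition clopenA (A : WSig) (U : X A -> Prop) : Prop :=
  openA A U /\ openA A (fun P => ~ U P).

Definition RA (A : WSig) (P Q : X A) : Prop :=
  forall a b, proj1_sig P (wimp A a b) -> proj1_sig Q a -> proj1_sig Q b.

Definition SA (A : WSig) (P Q : X A) : Prop :=
  forall a b, proj1_sig Q a -> ~ proj1_sig Q b -> proj1_sig P (wcoimp A a b).

Definition Clop (A : WSig) : Type := { U : X A -> Prop | clopenA A U }.

Lemma clopen_empty (A : WSig) : clopenA A (fun _ => False).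
Proof.
  split.
  - intros P [].
  - intros P _. exists nil. split.
    + intros s [].
    + intros Q _ [].
Qed.

(* All
   operations below are applied only to sets that are in fact clopen
   (closure of clopens under the Boolean operations and under G_A, H_A),
   so the fallback value is never used in the intended algebra. *)
Definition mk_clop (A : WSig) (S : X A -> Prop) : Clop A :=
  match excluded_middle_informative (clopenA A S) with
  | left h => exist _ S h
  | right _ => exist _ (fun _ => False) (clopen_empty A)
  end.

Definition GA (A : WSig) (U : X A -> Prop) : X A -> Prop :=
  fun P => forall Q, RA A P Q -> U Q.
Definition HA (A : WSig) (U : X A -> Prop) : X A -> Prop :=
  fun P => forall Q, SA A P Q -> U Q.

Definition T (A : WSig) : TSig := {|
  tcar := Clop A;
  tmeet := fun U V => mk_clop A (fun P => proj1_sig U P /\ proj1_sig V P);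
  tjoin := fun U V => mk_clop A (fun P => proj1_sig U P \/ proj1_sig V P);
  tneg := fun U => mk_clop A (fun P => ~ proj1_sig U P);
  tzero := mk_clop A (fun _ => False);
  tone := mk_clop A (fun _ => True);
  tG := fun U => mk_clop A (GA A (proj1_sig U));
  tH := fun U => mk_clop A (HA A (proj1_sig U)) |}.

Definition tense_companion (K : WSig -> Prop) (N : TSig -> Prop) : Prop :=
  (forall A, K A -> N (T A)) /\ (forall B, N B -> K (M B)).

Definition whom (A B : WSig) (f : A -> B) : Prop :=
  (forall a b, f (wmeet A a b) = wmeet B (f a) (f b)) /\
  (forall a b, f (wjoin A a b) = wjoin B (f a) (f b)) /\
  (forall a b, f (wimp A a b) = wimp B (f a) (f b)) /\
  (forall a b, f (wcoimp A a b) = wcoimp B (f a) (f b)) /\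
  f (wzero A) = wzero B /\ f (wone A) = wone B.

Definition thom (A B : TSig) (f : A -> B) : Prop :=
  (forall a b, f (tmeet A a b) = tmeet B (f a) (f b)) /\
  (forall a b, f (tjoin A a b) = tjoin B (f a) (f b)) /\
  (forall a, f (tneg A a) = tneg B (f a)) /\
  f (tzero A) = tzero B /\ f (tone A) = tone B /\
  (forall a, f (tG A a) = tG B (f a)) /\
  (forall a, f (tH A a) = tH B (f a)).

Definition injective {X Y : Type} (f : X -> Y) : Prop :=
  forall x y, f x = f y -> x = y.

Definition w_amalgamation (V : WSig -> Prop) : Prop :=
  forall (A B C : WSig) (i : A -> B) (j : A -> C),
    V A -> V B -> V C ->
    whom A B i -> injective i -> whom A C j -> injective j ->
    exists (D : WSig) (h : B -> D) (k : C -> D),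
      V D /\ whom B D h /\ injective h /\ whom C D k /\ injective k /\
      (forall a, h (i a) = k (j a)).

Definition t_amalgamation (V : TSig -> Prop) : Prop :=
  forall (A B C : TSig) (i : A -> B) (j : A -> C),
    V A -> V B -> V C ->
    thom A B i -> injective i -> thom A C j -> injective j ->
    exists (D : TSig) (h : B -> D) (k : C -> D),
      V D /\ thom B D h /\ injective h /\ thom C D k /\ injective k /\
      (forall a, h (i a) = k (j a)).

(* The functors M and T carry amalgamation problems back and forth. A WHB-algebra A embeds into
   M (T A) by a |-> sigma(a) (prime filter theorem), and a tense algebra B has the same
   operations as M B, so WHB-homomorphisms M B -> M C are tense homomorphisms B -> C. An
   injective homomorphism i : A -> B induces X(i) : X B -> X A, P |-> i^-1(P), which is
   surjective and a bounded morphism for R and S, since a prime filter of A together with its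
   R- and S-successors lifts along i; hence T(i) : U |-> X(i)^-1(U) is an injective tense
   homomorphism T A -> T B. Thus an amalgam D in K of M A, M B, M C yields the amalgam T D in N,
   and an amalgam D in N of T A, T B, T C yields the amalgam M D in K. Compactness of X A shows that each clopen set is a
   finite intersection of sets X A \ sigma(a) U sigma(b), whose images under G_A and H_A are
   sigma(a -> b) and X A \ sigma(a <- b); so G_A and H_A preserve clopen sets, which [T] needs
   because [mk_clop] sends every other set to the empty one. *)

From Stdlib Require Import List Classical ClassicalEpsilon.
From Stdlib Require Import FunctionalExtensionality PropExtensionality ProofIrrelevance.
From mathcomp Require classical_sets.
Import ListNotations.

Definition included {T : Type} (U V : T -> Prop) : Prop := forall x, U x -> V x.

Definition chain {T : Type} (C : (T -> Prop) -> Prop) : Prop :=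
  forall N1 N2, C N1 -> C N2 -> included N1 N2 \/ included N2 N1.

Definition chain_union {T : Type} (C : (T -> Prop) -> Prop) : T -> Prop :=
  fun x => exists N, C N /\ N x.

Lemma pred_ext {T : Type} (U V : T -> Prop) : (forall x, U x <-> V x) -> U = V.
Proof.
  intro h. apply functional_extensionality. intro x. apply propositional_extensionality. auto.
Qed.

Lemma zorn_above {T : Type} (Phi : (T -> Prop) -> Prop) (X0 : T -> Prop) :
  Phi X0 ->
  (forall C, (exists N, C N) -> (forall N, C N -> Phi N) -> chain C -> Phi (chain_union C)) ->
  exists M, Phi M /\ included X0 M /\ forall N, Phi N -> included M N -> included N M.
Proof.
  intros H0 Hunion.
  (* [Zorn_bigcup] also asks for the union of the empty chain, hence the detour through [above]. *)
  set (above := fun N : T -> Prop => fun x => X0 x \/ N x).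
  destruct (@classical_sets.Zorn_bigcup T (fun N => Phi (above N))) as [M0 [HM0 M0max]].
  - intros F HF Htot.
    destruct (classic (exists N, F N)) as [[N0 HN0] | Hnone].
    + replace (above _) with (chain_union (fun N => exists N', F N' /\ N = above N')).
      * apply Hunion.
        -- exists (above N0); eauto.
        -- intros N [N' [HN' ->]]. exact (HF N' HN').
        -- intros N1 N2 [N1' [h1 ->]] [N2' [h2 ->]].
           destruct (Htot N1' N2' h1 h2) as [h | h]; [left | right];
             intros x [hx | hx]; [left | right; apply h | left | right; apply h]; auto.
      * apply pred_ext. intros x. split.
        -- intros [N [[N' [hN' ->]] [hx | hx]]]; [left | right]; auto. exists N'; auto.
        -- unfold above at 1. intros [hx | [N' hN' hx]].
           ++ exists (above N0). split; [eauto | left; auto].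
           ++ exists (above N'). split; [eauto | right; auto].
    + replace (above _) with X0; [exact H0 |].
      apply pred_ext. intros x. split; [left; auto |].
      unfold above. intros [hx | [N hN _]]; [exact hx | exfalso; eauto].
  - exists (above M0). split; [exact HM0 | split; [intros x hx; left; exact hx |]].
    intros N HN HAN. apply NNPP. intros Hn.
    assert (E : above N = N).
    { apply pred_ext. intros x. split; [intros [hx | hx]; [apply HAN; left |] | right]; auto. }
    apply (M0max N); [| rewrite E; exact HN].
    split; [intros x hx; apply HAN; right; exact hx |].
    intros hNA. apply Hn. intros x hx. right. apply hNA, hx.
Qed.

Section Lattice.
Context {A : WSig} (Hl : is_bdl (wmeet A) (wjoin A) (wzero A) (wone A)).

Local Infix "⊓" := (wmeet A) (at level 40, left associativity).
Local Infix "⊔" := (wjoin A) (at level 50, left associativity).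
Local Infix "≤" := (wle A) (at level 70).

Lemma meetA a b c : a ⊓ (b ⊓ c) = a ⊓ b ⊓ c.     Proof. apply Hl. Qed.
Lemma joinA a b c : a ⊔ (b ⊔ c) = a ⊔ b ⊔ c.     Proof. apply Hl. Qed.
Lemma meetC a b : a ⊓ b = b ⊓ a.                 Proof. apply Hl. Qed.
Lemma joinC a b : a ⊔ b = b ⊔ a.                 Proof. apply Hl. Qed.
Lemma meetKU a b : a ⊓ (a ⊔ b) = a.              Proof. apply Hl. Qed.
Lemma joinKI a b : a ⊔ (a ⊓ b) = a.              Proof. apply Hl. Qed.
Lemma meetUr a b c : a ⊓ (b ⊔ c) = a ⊓ b ⊔ a ⊓ c. Proof. apply Hl. Qed.
Lemma meetx1 a : a ⊓ wone A = a.                 Proof. apply Hl. Qed.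
Lemma joinx0 a : a ⊔ wzero A = a.                Proof. apply Hl. Qed.

Lemma meetxx a : a ⊓ a = a.
Proof. rewrite <- (joinKI a a) at 2. apply meetKU. Qed.

Lemma meetx0 a : a ⊓ wzero A = wzero A.
Proof. rewrite meetC, <- (joinx0 a), (joinC a). apply meetKU. Qed.

Lemma joinIr a b c : a ⊔ b ⊓ c = (a ⊔ b) ⊓ (a ⊔ c).
Proof.
  rewrite (meetUr (a ⊔ b) a c), (meetC (a ⊔ b) a), meetKU, (meetC (a ⊔ b) c), meetUr.
  rewrite joinA, (meetC c a), joinKI, (meetC c b). reflexivity.
Qed.

Lemma leEjoin a b : a ≤ b <-> a ⊔ b = b.
Proof.
  unfold wle; split; intro H.
  - rewrite <- H, joinC, meetC. apply joinKI.
  - rewrite <- H. apply meetKU.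
Qed.

Lemma le_refl a : a ≤ a.
Proof. apply meetxx. Qed.

Lemma le_trans a b c : a ≤ b -> b ≤ c -> a ≤ c.
Proof. unfold wle; intros H1 H2. rewrite <- H1, <- meetA, H2. reflexivity. Qed.

Lemma le_anti a b : a ≤ b -> b ≤ a -> a = b.
Proof. unfold wle; intros H1 H2. rewrite <- H1, meetC. exact H2. Qed.

Lemma leIl a b : a ⊓ b ≤ a.
Proof. unfold wle. rewrite (meetC (a ⊓ b) a), meetA, meetxx. reflexivity. Qed.

Lemma leIr a b : a ⊓ b ≤ b.
Proof. unfold wle. rewrite <- meetA, meetxx. reflexivity. Qed.

Lemma lexI x a b : x ≤ a -> x ≤ b -> x ≤ a ⊓ b.
Proof. unfold wle; intros H1 H2. rewrite meetA, H1, H2. reflexivity. Qed.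

Lemma leUl a b : a ≤ a ⊔ b.
Proof. apply meetKU. Qed.

Lemma leUr a b : b ≤ a ⊔ b.
Proof. rewrite joinC. apply meetKU. Qed.

Lemma leUx a b x : a ≤ x -> b ≤ x -> a ⊔ b ≤ x.
Proof.
  rewrite !leEjoin. intros H1 H2. rewrite <- joinA, H2, H1. reflexivity.
Qed.

Lemma leI2 a b c d : a ≤ c -> b ≤ d -> a ⊓ b ≤ c ⊓ d.
Proof.
  intros. apply lexI; [apply le_trans with a | apply le_trans with b];
    auto using leIl, leIr.
Qed.

Lemma leU2 a b c d : a ≤ c -> b ≤ d -> a ⊔ b ≤ c ⊔ d.
Proof.
  intros. apply leUx; [apply le_trans with c | apply le_trans with d];
    auto using leUl, leUr.
Qed.

Lemma lex1 a : a ≤ wone A.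
Proof. apply meetx1. Qed.

Lemma le0x a : wzero A ≤ a.
Proof. unfold wle. rewrite meetC. apply meetx0. Qed.

Lemma complement_unique x y z :
  x ⊓ y = wzero A -> x ⊔ y = wone A -> x ⊓ z = wzero A -> x ⊔ z = wone A -> y = z.
Proof.
  assert (Hkey : forall y z, x ⊓ y = wzero A -> x ⊔ z = wone A -> y = y ⊓ z).
  { intros y' z' h1 h2. rewrite <- (meetx1 y') at 1. rewrite <- h2, meetUr, (meetC y' x), h1.
    rewrite joinC. apply joinx0. }
  intros h1 h2 h3 h4. rewrite (Hkey y z h1 h4), meetC. symmetry. apply Hkey; assumption.
Qed.

End Lattice.

Definition wdual (A : WSig) : WSig := {|
  wcar := A; wmeet := wjoin A; wjoin := wmeet A; wimp := wimp A; wcoimp := wcoimp A;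
  wzero := wone A; wone := wzero A |}.

Lemma is_bdl_dual (A : WSig) :
  is_bdl (wmeet A) (wjoin A) (wzero A) (wone A) ->
  is_bdl (wmeet (wdual A)) (wjoin (wdual A)) (wzero (wdual A)) (wone (wdual A)).
Proof.
  intros Hl. repeat split; intros; simpl.
  - apply (joinA Hl). - apply (meetA Hl). - apply (joinC Hl). - apply (meetC Hl).
  - apply (joinKI Hl). - apply (meetKU Hl). - apply (joinIr Hl).
  - apply (joinx0 Hl). - apply (meetx1 Hl).
Qed.

Lemma wle_dual (A : WSig) (Hl : is_bdl (wmeet A) (wjoin A) (wzero A) (wone A)) a b :
  wle (wdual A) a b <-> wle A b a.
Proof. unfold wle; simpl. rewrite (joinC Hl). symmetry. apply (leEjoin Hl). Qed.

Definition is_filter (A : WSig) (F : A -> Prop) : Prop :=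
  (exists x, F x) /\ (forall a b, F a -> wle A a b -> F b) /\
  (forall a b, F a -> F b -> F (wmeet A a b)).

Definition is_ideal (A : WSig) (I : A -> Prop) : Prop :=
  (exists x, I x) /\ (forall a b, I b -> wle A a b -> I a) /\
  (forall a b, I a -> I b -> I (wjoin A a b)).

Definition disjoint {T : Type} (U V : T -> Prop) : Prop := forall x, U x -> V x -> False.

Lemma prime_filter_le {A : WSig} (P : A -> Prop) :
  prime_filter A P -> forall a b, P a -> wle A a b -> P b.
Proof. intros (_ & _ & _ & Pu & _). apply Pu. Qed.

Section PrimeFilters.
Context {A : WSig} (Hl : is_bdl (wmeet A) (wjoin A) (wzero A) (wone A)).

Local Infix "⊓" := (wmeet A) (at level 40, left associativity).
Local Infix "⊔" := (wjoin A) (at level 50, left associativity).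
Local Infix "≤" := (wle A) (at level 70).

Lemma prime_filter_meet (P : A -> Prop) (HP : prime_filter A P) a b : P (a ⊓ b) <-> P a /\ P b.
Proof.
  split.
  - intro h. split; apply (prime_filter_le P HP (a ⊓ b)); auto; [apply (leIl Hl) | apply (leIr Hl)].
  - intros [h1 h2]. apply HP; auto.
Qed.

Lemma prime_filter_join (P : A -> Prop) (HP : prime_filter A P) a b : P (a ⊔ b) <-> P a \/ P b.
Proof.
  split.
  - apply HP.
  - intros [h | h]; [apply (prime_filter_le P HP a) | apply (prime_filter_le P HP b)]; auto;
      [apply (leUl Hl) | apply (leUr Hl)].
Qed.

Lemma principal_filter a : is_filter A (wle A a).
Proof.
  split; [| split].
  - exists a. apply (le_refl Hl).
  - intros x y h1 h2. apply (le_trans Hl) with x; auto.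
  - intros x y h1 h2. apply (lexI Hl); auto.
Qed.

Lemma principal_ideal b : is_ideal A (fun x => x ≤ b).
Proof.
  split; [| split].
  - exists b. apply (le_refl Hl).
  - intros x y h1 h2. apply (le_trans Hl) with y; auto.
  - intros x y h1 h2. apply (leUx Hl); auto.
Qed.

Lemma maximal_disjoint_filter (F I : A -> Prop) :
  is_filter A F -> is_ideal A I -> disjoint F I ->
  exists Q, is_filter A Q /\ included F Q /\ disjoint Q I /\
    forall y, ~ Q y -> exists q, Q q /\ I (q ⊓ y).
Proof.
  intros [[f0 Hf0] [Fup Fm]] (_ & Idn & _) Hdis.
  set (Phi := fun G : A -> Prop => (forall a b, G a -> a ≤ b -> G b) /\
       (forall a b, G a -> G b -> G (a ⊓ b)) /\ disjoint G I).
  destruct (zorn_above Phi F) as [Q [[Qup [Qm Qdis]] [HFQ Qmax]]].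
  - split; [| split]; assumption.
  - intros C _ HC Htot. split; [| split].
    + intros a b [N [HN Ha]] Hab. exists N. split; [| apply (HC N HN) with a]; auto.
    + intros a b [N1 [HN1 Ha]] [N2 [HN2 Hb]].
      destruct (Htot N1 N2 HN1 HN2) as [h | h].
      * exists N2. split; [| apply (HC N2 HN2)]; auto.
      * exists N1. split; [| apply (HC N1 HN1)]; auto.
    + intros x [N [HN Hx]]. apply (HC N HN), Hx.
  - exists Q. split; [split; [exists f0; auto | auto] | split; [exact HFQ | split; [exact Qdis |]]].
    intros y Hy. apply NNPP. intro Hne.
    set (G := fun w => exists q, Q q /\ q ⊓ y ≤ w).
    assert (HG : Phi G).
    { split; [| split].
      - intros a b [q [Hq H1]] H2. exists q. split; [| apply (le_trans Hl) with a]; auto.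
      - intros a b [q1 [Hq1 H1]] [q2 [Hq2 H2]]. exists (q1 ⊓ q2). split; auto.
        apply (lexI Hl).
        + apply (le_trans Hl) with (q1 ⊓ y); auto.
          apply (leI2 Hl); [apply (leIl Hl) | apply (le_refl Hl)].
        + apply (le_trans Hl) with (q2 ⊓ y); auto.
          apply (leI2 Hl); [apply (leIr Hl) | apply (le_refl Hl)].
      - intros x [q [Hq H1]] Hx. apply Hne. exists q. split; [| apply Idn with x]; auto. }
    apply Hy. apply (Qmax G HG).
    + intros q Hq. exists q. split; [| apply (leIl Hl)]; auto.
    + exists f0. split; [apply HFQ | apply (leIr Hl)]; auto.
Qed.

Lemma prime_filter_separation (F I : A -> Prop) :
  is_filter A F -> is_ideal A I -> disjoint F I ->
  exists Q, prime_filter A Q /\ included F Q /\ disjoint Q I /\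
    forall y, ~ Q y -> exists q, Q q /\ I (q ⊓ y).
Proof.
  intros HF HI Hdis.
  destruct (maximal_disjoint_filter F I HF HI Hdis) as (Q & [[q0 Hq0] [Qup Qm]] & HFQ & Qdis & Qmax).
  destruct HI as [[i0 Hi0] [Idn Ij]].
  exists Q. split; [| auto].
  split; [| split; [| split; [| split]]]; auto.
  - apply Qup with q0; auto. apply (lex1 Hl).
  - intro Hz. apply (Qdis (wzero A)); auto. apply Idn with i0; auto. apply (le0x Hl).
  - intros a b Hab. apply NNPP. intro Hn.
    destruct (Qmax a) as [q1 [Hq1 I1]]; [tauto |].
    destruct (Qmax b) as [q2 [Hq2 I2]]; [tauto |].
    apply (Qdis (q1 ⊓ q2 ⊓ (a ⊔ b))); [apply Qm; auto |].
    rewrite (meetUr Hl). apply Ij.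
    + apply Idn with (q1 ⊓ a); auto. apply (leI2 Hl); [apply (leIl Hl) | apply (le_refl Hl)].
    + apply Idn with (q2 ⊓ b); auto. apply (leI2 Hl); [apply (leIr Hl) | apply (le_refl Hl)].
Qed.

End PrimeFilters.

(* Separation in the dual order with [F] and [I] exchanged; the complement of the prime filter
   obtained there is the one wanted. *)
Lemma prime_filter_separation_dual {A : WSig} (Hl : is_bdl (wmeet A) (wjoin A) (wzero A) (wone A))
    (F I : A -> Prop) :
  is_filter A F -> is_ideal A I -> disjoint F I ->
  exists Q, prime_filter A Q /\ included F Q /\ disjoint Q I /\
    forall y, Q y -> exists j, ~ Q j /\ F (wjoin A y j).
Proof.
  intros [HF [Fup Fm]] [HI [Idn Ij]] Hdis.
  destruct (prime_filter_separation (is_bdl_dual A Hl) I F) as (J & HJ & HIJ & HJF & Jmax).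
  - split; [exact HI | split; [| exact Ij]].
    intros a b Ha Hab. apply Idn with a; auto. apply (wle_dual A Hl), Hab.
  - split; [exact HF | split; [| exact Fm]].
    intros a b Hb Hab. apply Fup with b; auto. apply (wle_dual A Hl), Hab.
  - intros x h1 h2. apply (Hdis x); auto.
  - destruct HJ as (J1 & J0 & Jm & Ju & Jp).
    exists (fun x => ~ J x). split; [| split; [| split]].
    + split; [| split; [| split; [| split]]].
      * exact J0.
      * intro h. apply h, J1.
      * intros a b Ha Hb Hab. destruct (Jp a b Hab); auto.
      * intros a b Ha Hab Hb. apply Ha, Ju with b; auto. apply (wle_dual A Hl), Hab.
      * intros a b Hab. apply NNPP. intro Hn. apply Hab, Jm; apply NNPP; tauto.
    + intros x Hx HJx. apply (HJF x); auto.
    + intros x Hx Hi. apply Hx, HIJ, Hi.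
    + intros y Hy. destruct (Jmax y Hy) as [q [Hq Hf]]. exists q. split; [tauto |].
      simpl in Hf. rewrite (joinC Hl). exact Hf.
Qed.

Lemma prime_filter_theorem {A : WSig} (Hl : is_bdl (wmeet A) (wjoin A) (wzero A) (wone A)) a b :
  ~ wle A a b -> exists Q : X A, proj1_sig Q a /\ ~ proj1_sig Q b.
Proof.
  intros Hab.
  destruct (prime_filter_separation Hl (wle A a) (fun x => wle A x b)) as (Q & HQ & HaQ & Qb & _).
  - apply (principal_filter Hl).
  - apply (principal_ideal Hl).
  - intros x h1 h2. apply Hab, (le_trans Hl) with x; auto.
  - exists (exist _ Q HQ). split; [apply HaQ, (le_refl Hl) | intro h; apply (Qb b h), (le_refl Hl)].
Qed.

Section WHBAlgebra.
Context {A : WSig} (Hw : is_WHB A).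
Let Hl := proj1 Hw.

Local Infix "⊓" := (wmeet A) (at level 40, left associativity).
Local Infix "⊔" := (wjoin A) (at level 50, left associativity).
Local Infix "≤" := (wle A) (at level 70).
Local Infix "→" := (wimp A) (at level 55, right associativity).
Local Infix "←" := (wcoimp A) (at level 55, right associativity).

Lemma imp_refl a : a → a = wone A.
Proof. apply Hw. Qed.
Lemma imp_meetr a b c : a → b ⊓ c = (a → b) ⊓ (a → c).
Proof. apply Hw. Qed.
Lemma imp_joinl a b c : a ⊔ b → c = (a → c) ⊓ (b → c).
Proof. apply Hw. Qed.
Lemma imp_trans a b c : (a → b) ⊓ (b → c) ≤ a → c.
Proof. apply Hw. Qed.
Lemma coimp_refl a : a ← a = wzero A.
Proof. apply Hw. Qed.
Lemma coimp_joinl a b c : a ⊔ b ← c = (a ← c) ⊔ (b ← c).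
Proof. apply Hw. Qed.
Lemma coimp_meetr a b c : a ← b ⊓ c = (a ← b) ⊔ (a ← c).
Proof. apply Hw. Qed.
Lemma coimp_trans a b c : a ← c ≤ (a ← b) ⊔ (b ← c).
Proof. apply Hw. Qed.

Lemma imp_antitone a a' b : a ≤ a' -> a' → b ≤ a → b.
Proof.
  intro h. apply (leEjoin Hl) in h.
  rewrite <- h. rewrite imp_joinl. apply (leIl Hl).
Qed.

Lemma imp_monotone a b b' : b ≤ b' -> a → b ≤ a → b'.
Proof. intro h. unfold wle in h. rewrite <- h. rewrite imp_meetr. apply (leIr Hl). Qed.

Lemma imp_eq1 a b : a ≤ b -> a → b = wone A.
Proof.
  intro h. apply (le_anti Hl); [apply (lex1 Hl) |].
  rewrite <- (imp_refl b). apply imp_antitone, h.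
Qed.

Lemma coimp_monotone a a' b : a ≤ a' -> a ← b ≤ a' ← b.
Proof.
  intro h. apply (leEjoin Hl) in h.
  rewrite <- h. rewrite coimp_joinl. apply (leUl Hl).
Qed.

Lemma coimp_antitone a b b' : b ≤ b' -> a ← b' ≤ a ← b.
Proof. intro h. unfold wle in h. rewrite <- h. rewrite coimp_meetr. apply (leUr Hl). Qed.

Lemma coimp_eq0 a b : a ≤ b -> a ← b = wzero A.
Proof.
  intro h. apply (le_anti Hl); [| apply (le0x Hl)].
  rewrite <- (coimp_refl a). apply coimp_antitone, h.
Qed.

Lemma RA_extension (P : X A) (F I : A -> Prop) :
  is_filter A F -> is_ideal A I -> disjoint F I ->
  (forall x y, proj1_sig P (x → y) -> I y -> I x) ->
  exists Q : X A, included F (proj1_sig Q) /\ disjoint (proj1_sig Q) I /\ RA A P Q.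
Proof.
  intros HF HI Hdis Hcl.
  destruct (prime_filter_separation Hl F I HF HI Hdis) as (Q & HQ & HFQ & QI & Qmax).
  exists (exist _ Q HQ). split; [exact HFQ | split; [exact QI |]].
  intros x y Hxy Hx. simpl in *. apply NNPP. intro Hy.
  destruct (Qmax y Hy) as [q [Hq Hqy]].
  apply (QI (q ⊓ x)); [apply HQ; auto |].
  apply Hcl with (q ⊓ y); auto.
  apply (prime_filter_le _ (proj2_sig P) (x → y)); [exact Hxy |].
  rewrite imp_meetr, (imp_eq1 (q ⊓ x) q) by apply (leIl Hl).
  rewrite (meetC Hl), (meetx1 Hl). apply imp_antitone, (leIr Hl).
Qed.

Lemma SA_extension (P : X A) (F I : A -> Prop) :
  is_filter A F -> is_ideal A I -> disjoint F I ->
  (forall w w', F w -> ~ F w' -> proj1_sig P (w ← w')) ->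
  exists Q : X A, included F (proj1_sig Q) /\ disjoint (proj1_sig Q) I /\ SA A P Q.
Proof.
  intros HF HI Hdis Hcl.
  destruct (prime_filter_separation_dual Hl F I HF HI Hdis) as (Q & HQ & HFQ & QI & Qmax).
  exists (exist _ Q HQ). split; [exact HFQ | split; [exact QI |]].
  intros x y Hx Hy. simpl in *.
  destruct (Qmax x Hx) as [j [Hj Hxj]].
  assert (Hyj : ~ F (y ⊔ j)).
  { intro h. apply HFQ, (prime_filter_join Hl _ HQ) in h. tauto. }
  assert (Hc := Hcl _ _ Hxj Hyj).
  rewrite coimp_joinl in Hc.
  apply (prime_filter_join Hl _ (proj2_sig P)) in Hc. destruct Hc as [h | h].
  - apply (prime_filter_le _ (proj2_sig P) (x ← y ⊔ j)); [exact h |].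
    apply coimp_antitone, (leUl Hl).
  - exfalso. apply (proj2_sig P). rewrite <- (coimp_eq0 j (y ⊔ j)); [exact h | apply (leUr Hl)].
Qed.

Lemma RA_witness (P : X A) a b :
  ~ proj1_sig P (a → b) -> exists Q : X A, RA A P Q /\ proj1_sig Q a /\ ~ proj1_sig Q b.
Proof.
  intros Hab. destruct (proj2_sig P) as (P1 & _ & Pm & _ & _).
  assert (Pu := prime_filter_le _ (proj2_sig P)).
  destruct (RA_extension P (wle A a) (fun x => proj1_sig P (x → b))) as (Q & HaQ & QI & HR).
  - apply (principal_filter Hl).
  - split; [| split].
    + exists b. rewrite imp_refl. exact P1.
    + intros x y Hy Hxy. apply Pu with (y → b); auto. apply imp_antitone, Hxy.
    + intros x y Hx Hy. simpl. rewrite imp_joinl. apply Pm; auto.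
  - intros x Hax Hx. apply Hab, Pu with (x → b); auto. apply imp_antitone, Hax.
  - intros x y Hxy Hyb. apply Pu with ((x → y) ⊓ (y → b)); [apply Pm; auto | apply imp_trans].
  - exists Q. split; [exact HR | split; [apply HaQ, (le_refl Hl) |]].
    intro Hb. apply (QI b Hb). rewrite imp_refl. exact P1.
Qed.

Lemma SA_witness (P : X A) a b :
  proj1_sig P (a ← b) -> exists Q : X A, SA A P Q /\ proj1_sig Q a /\ ~ proj1_sig Q b.
Proof.
  intros Hab. destruct (proj2_sig P) as (_ & P0 & _ & _ & _).
  assert (Pu := prime_filter_le _ (proj2_sig P)).
  assert (Pj := prime_filter_join Hl _ (proj2_sig P)).
  destruct (SA_extension P (fun y => ~ proj1_sig P (a ← y)) (fun x => x ≤ b))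
    as (Q & HFQ & QI & HS).
  - split; [| split].
    + exists a. rewrite coimp_refl. exact P0.
    + intros x y Hx Hxy Hy. apply Hx, Pu with (a ← y); auto. apply coimp_antitone, Hxy.
    + intros x y Hx Hy Hxy. rewrite coimp_meetr in Hxy. apply Pj in Hxy. tauto.
  - apply (principal_ideal Hl).
  - intros x Hx Hxb. apply Hx, Pu with (a ← b); auto. apply coimp_antitone, Hxb.
  - intros w w' h1 h2. apply NNPP in h2.
    assert (h := Pu _ _ h2 (coimp_trans a w w')). apply Pj in h. tauto.
  - exists Q. split; [exact HS | split].
    + apply HFQ. simpl. rewrite coimp_refl. exact P0.
    + intro Hb. apply (QI b Hb), (le_refl Hl).
Qed.

End WHBAlgebra.

Section Morphism.
Context {A B : WSig} (i : A -> B) (Hi : whom A B i).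

Lemma whom_le a b : wle A a b -> wle B (i a) (i b).
Proof. destruct Hi as [im _]. unfold wle. intro h. rewrite <- im, h. reflexivity. Qed.

Lemma prime_filter_preimage (P : B -> Prop) : prime_filter B P -> prime_filter A (fun a => P (i a)).
Proof.
  destruct Hi as (im & ij & _ & _ & iz & io).
  intros (P1 & P0 & Pm & Pu & Pp). split; [| split; [| split; [| split]]].
  - rewrite io. exact P1.
  - rewrite iz. exact P0.
  - intros a b Ha Hb. rewrite im. apply Pm; auto.
  - intros a b Ha Hab. apply Pu with (i a); auto. apply whom_le, Hab.
  - intros a b Hab. rewrite ij in Hab. apply Pp, Hab.
Qed.

Definition Xmap (P : X B) : X A :=
  exist _ (fun a => proj1_sig P (i a)) (prime_filter_preimage _ (proj2_sig P)).

Context (HwA : is_WHB A) (HwB : is_WHB B).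
Let HlA := proj1 HwA.
Let HlB := proj1 HwB.

Local Infix "≤" := (wle B) (at level 70).

Lemma image_filter (P : A -> Prop) :
  prime_filter A P -> is_filter B (fun y => exists p, P p /\ i p ≤ y).
Proof.
  destruct Hi as [im _]. intros (P1 & _ & Pm & _ & _). split; [| split].
  - exists (i (wone A)), (wone A). split; [exact P1 | apply (le_refl HlB)].
  - intros x y [p [Hp h1]] h2. exists p. split; [| apply (le_trans HlB) with x]; auto.
  - intros x y [p1 [Hp1 h1]] [p2 [Hp2 h2]]. exists (wmeet A p1 p2).
    split; [apply Pm; auto |]. rewrite im. apply (leI2 HlB); auto.
Qed.

Lemma image_ideal (P : A -> Prop) :
  prime_filter A P -> is_ideal B (fun y => exists c, ~ P c /\ y ≤ i c).
Proof.
  destruct Hi as (_ & ij & _). intros (_ & P0 & _ & _ & Pp). split; [| split].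
  - exists (i (wzero A)), (wzero A). split; [exact P0 | apply (le_refl HlB)].
  - intros x y [c [Hc h1]] h2. exists c. split; [| apply (le_trans HlB) with y]; auto.
  - intros x y [c1 [Hc1 h1]] [c2 [Hc2 h2]]. exists (wjoin A c1 c2).
    split; [intro h; destruct (Pp _ _ h); auto |]. rewrite ij. apply (leU2 HlB); auto.
Qed.

Lemma prime_filter_lift (P : X A) :
  injective i -> exists P' : X B, forall a, proj1_sig P' (i a) <-> proj1_sig P a.
Proof.
  destruct Hi as [im _]. intros Hinj.
  destruct (prime_filter_separation HlB _ _ (image_filter _ (proj2_sig P))
              (image_ideal _ (proj2_sig P))) as (P' & HP' & HFP' & P'I & _).
  - intros x [p [Hp h1]] [c [Hc h2]]. apply Hc.
    apply (prime_filter_le _ (proj2_sig P) p); [exact Hp |].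
    assert (h := le_trans HlB _ _ _ h1 h2). unfold wle in h |- *.
    rewrite <- im in h. apply Hinj, h.
  - exists (exist _ P' HP'). intros a. simpl. split; intro h.
    + apply NNPP. intro hn. apply (P'I (i a) h). exists a. split; [exact hn | apply (le_refl HlB)].
    + apply HFP'. exists a. split; [exact h | apply (le_refl HlB)].
Qed.

Lemma RA_lift (P' : X B) (Q : X A) :
  RA A (Xmap P') Q -> exists Q' : X B, RA B P' Q' /\ forall a, proj1_sig Q' (i a) <-> proj1_sig Q a.
Proof.
  destruct Hi as (_ & _ & iimp & _). intros HR.
  destruct (proj2_sig P') as (P1 & _ & Pm & _ & _).
  assert (Pu := prime_filter_le _ (proj2_sig P')).
  destruct (proj2_sig Q) as (_ & _ & _ & _ & Qp).
  set (I := fun x => exists c, ~ proj1_sig Q c /\ proj1_sig P' (wimp B x (i c))).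
  destruct (RA_extension HwB P' _ I (image_filter _ (proj2_sig Q))) as (Q' & HFQ' & Q'I & HR').
  - split; [| split].
    + exists (i (wzero A)), (wzero A). split; [apply (proj2_sig Q) |].
      rewrite (imp_refl HwB). exact P1.
    + intros x y [c [Hc h]] Hxy. exists c. split; [exact Hc |].
      apply Pu with (wimp B y (i c)); [exact h | apply (imp_antitone HwB), Hxy].
    + intros x y [c1 [Hc1 h1]] [c2 [Hc2 h2]]. exists (wjoin A c1 c2).
      split; [intro h; destruct (Qp _ _ h); auto |].
      rewrite (imp_joinl HwB). apply Pm.
      * apply Pu with (wimp B x (i c1)); [exact h1 |].
        apply (imp_monotone HwB), whom_le, (leUl HlA).
      * apply Pu with (wimp B y (i c2)); [exact h2 |].
        apply (imp_monotone HwB), whom_le, (leUr HlA).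
  - intros x [q [Hq h1]] [c [Hc h2]]. apply Hc, (HR q c); [| exact Hq].
    simpl. rewrite iimp. apply Pu with (wimp B x (i c)); [exact h2 | apply (imp_antitone HwB), h1].
  - intros x y Hxy [c [Hc h]]. exists c. split; [exact Hc |].
    apply Pu with (wmeet B (wimp B x y) (wimp B y (i c))); [apply Pm; auto | apply (imp_trans HwB)].
  - exists Q'. split; [exact HR' |]. intros a. split; intro h.
    + apply NNPP. intro hn. apply (Q'I (i a) h). exists a. split; [exact hn |].
      rewrite (imp_refl HwB). exact P1.
    + apply HFQ'. exists a. split; [exact h | apply (le_refl HlB)].
Qed.

Lemma SA_lift (P' : X B) (Q : X A) :
  SA A (Xmap P') Q -> exists Q' : X B, SA B P' Q' /\ forall a, proj1_sig Q' (i a) <-> proj1_sig Q a.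
Proof.
  destruct Hi as (_ & _ & _ & icoimp & _). intros HS.
  destruct (proj2_sig P') as (_ & P0 & _ & _ & _).
  assert (Pu := prime_filter_le _ (proj2_sig P')).
  assert (Pj := prime_filter_join HlB _ (proj2_sig P')).
  destruct (proj2_sig Q) as (_ & _ & Qm & _ & _).
  set (F := fun y => exists q, proj1_sig Q q /\ ~ proj1_sig P' (wcoimp B (i q) y)).
  destruct (SA_extension HwB P' F (fun y => exists c, ~ proj1_sig Q c /\ y ≤ i c))
    as (Q' & HFQ' & Q'I & HS').
  - split; [| split].
    + exists (i (wone A)), (wone A). split; [apply (proj2_sig Q) |].
      rewrite (coimp_refl HwB). exact P0.
    + intros x y [q [Hq h1]] h2. exists q. split; [exact Hq |]. intro h. apply h1.
      apply Pu with (wcoimp B (i q) y); [exact h | apply (coimp_antitone HwB), h2].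
    + intros x y [q1 [Hq1 h1]] [q2 [Hq2 h2]]. exists (wmeet A q1 q2). split; [apply Qm; auto |].
      rewrite (coimp_meetr HwB). intro h. apply Pj in h. destruct h as [h | h].
      * apply h1, Pu with (wcoimp B (i (wmeet A q1 q2)) x); [exact h |].
        apply (coimp_monotone HwB), whom_le, (leIl HlA).
      * apply h2, Pu with (wcoimp B (i (wmeet A q1 q2)) y); [exact h |].
        apply (coimp_monotone HwB), whom_le, (leIr HlA).
  - apply image_ideal, (proj2_sig Q).
  - intros x [q [Hq h1]] [c [Hc h2]]. apply h1.
    apply Pu with (wcoimp B (i q) (i c)); [| apply (coimp_antitone HwB), h2].
    rewrite <- icoimp. apply HS; assumption.
  - intros w w' [q [Hq hw]] hw'.
    assert (h : proj1_sig P' (wcoimp B (i q) w')).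
    { apply NNPP. intro hn. apply hw'. exists q. auto. }
    assert (h2 := Pu _ _ h (coimp_trans HwB (i q) w w')). apply Pj in h2. tauto.
  - exists Q'. split; [exact HS' |]. intros a. split; intro h.
    + apply NNPP. intro hn. apply (Q'I (i a) h). exists a. split; [exact hn | apply (le_refl HlB)].
    + apply HFQ'. exists a. split; [exact h |]. rewrite (coimp_refl HwB). exact P0.
Qed.

End Morphism.

(* Members of [l] outside [Γ] are ignored, so that lists never need to be filtered. *)
Definition finitely_satisfiable {M : Type} (Γ : (M -> Prop) -> Prop) : Prop :=
  forall l : list (M -> Prop), exists m, forall φ, In φ l -> Γ φ -> φ m.

Lemma finitely_satisfiable_model {M : Type} (Γ : (M -> Prop) -> Prop) (l : list (M -> Prop)) :
  finitely_satisfiable Γ -> (forall φ, In φ l -> Γ φ) -> exists m, forall φ, In φ l -> φ m.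
Proof. intros HΓ Hl. destruct (HΓ l) as [m Hm]. exists m. intros φ hφ. apply Hm, Hl; exact hφ. Qed.

Lemma chain_list_bound {T : Type} (C : (T -> Prop) -> Prop) :
  (exists N, C N) -> chain C ->
  forall l : list T, exists N, C N /\ forall x, In x l -> chain_union C x -> N x.
Proof.
  intros [N0 H0] Htot l. induction l as [| a l [N1 [HN1 Hin]]].
  - exists N0. split; [exact H0 | intros x []].
  - destruct (classic (chain_union C a)) as [[N2 [HN2 Ha]] | Ha].
    + destruct (Htot N1 N2 HN1 HN2) as [h | h].
      * exists N2. split; [exact HN2 |]. intros x [<- | hx] hu; auto.
      * exists N1. split; [exact HN1 |]. intros x [<- | hx] hu; auto.
    + exists N1. split; [exact HN1 |]. intros x [<- | hx] hu; [contradiction | auto].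
Qed.

Lemma lindenbaum {M : Type} (Γ0 : (M -> Prop) -> Prop) :
  finitely_satisfiable Γ0 ->
  exists Γ, included Γ0 Γ /\ finitely_satisfiable Γ /\ forall φ, Γ φ \/ Γ (fun m => ~ φ m).
Proof.
  intros H0.
  destruct (zorn_above finitely_satisfiable Γ0) as (Γ & HΓ & HΓ0 & Γmax).
  - exact H0.
  - intros C HC Hfs Htot l.
    destruct (chain_list_bound C HC Htot l) as [N [HN Hin]].
    destruct (Hfs N HN l) as [m Hm]. exists m. intros φ hφ [N' [HN' hN']].
    apply Hm; [exact hφ | apply Hin; [exact hφ | exists N'; auto]].
  - exists Γ. split; [exact HΓ0 | split; [exact HΓ |]]. intros φ.
    assert (Hext : forall ψ, ~ Γ ψ ->
      exists l, forall m, exists χ, In χ l /\ (Γ χ \/ χ = ψ) /\ ~ χ m).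
    { intros ψ Hψ. apply NNPP. intro Hn. apply Hψ.
      apply (Γmax (fun χ => Γ χ \/ χ = ψ)); [| intros χ h; left; exact h | right; reflexivity].
      intros l. apply NNPP. intro Hno. apply Hn. exists l. intros m. apply NNPP. intro Hm.
      apply Hno. exists m. intros χ hχ h. apply NNPP. intro hn. apply Hm. exists χ. auto. }
    apply NNPP. intros Hn.
    destruct (Hext φ) as [l1 H1]; [tauto |].
    destruct (Hext (fun m => ~ φ m)) as [l2 H2]; [tauto |].
    destruct (HΓ (l1 ++ l2)) as [m Hm].
    destruct (classic (φ m)) as [hφ | hφ].
    + destruct (H1 m) as (χ & hχ & [h | ->] & hn); [| contradiction].
      apply hn, Hm; [apply in_or_app; left |]; assumption.
    + destruct (H2 m) as (χ & hχ & [h | ->] & hn); [| contradiction].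
      apply hn, Hm; [apply in_or_app; right |]; assumption.
Qed.

Lemma list_choice {U V : Type} (D : U -> Prop) (R : U -> V -> Prop) (l : list U) :
  (forall x, D x -> exists y, R x y) ->
  exists l', (forall y, In y l' -> exists x, D x /\ R x y) /\
             (forall x, In x l -> D x -> exists y, In y l' /\ R x y).
Proof.
  intros HR. induction l as [| a l [l' [H1 H2]]].
  - exists []. split; intros _ [].
  - destruct (classic (D a)) as [Ha | Ha].
    + destruct (HR a Ha) as [b Hb]. exists (b :: l'). split.
      * intros y [<- | hy]; eauto.
      * intros x [<- | hx] Dx; [exists b; split; [left |] |
          destruct (H2 x hx Dx) as [y [hy Ry]]; exists y; split; [right |]]; auto.
    + exists l'. split; [exact H1 |]. intros x [<- | hx] Dx; [contradiction | auto].
Qed.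

Definition basic {A : WSig} (a b : A) (P : X A) : Prop := proj1_sig P a /\ ~ proj1_sig P b.

Lemma decided_prime_filter {A : WSig} (Hl : is_bdl (wmeet A) (wjoin A) (wzero A) (wone A))
    (Γ : (X A -> Prop) -> Prop) :
  finitely_satisfiable Γ -> (forall φ, Γ φ \/ Γ (fun m => ~ φ m)) ->
  prime_filter A (fun c => Γ (sigma_ A c)).
Proof.
  intros HΓ Hdec.
  assert (refute : forall l, (forall φ, In φ l -> Γ φ) ->
                     (forall m, (forall φ, In φ l -> φ m) -> False) -> False).
  { intros l hl hm. destruct (finitely_satisfiable_model Γ l HΓ hl) as [m Hm]. exact (hm m Hm). }
  assert (Hneg : forall c, ~ Γ (sigma_ A c) -> Γ (fun P => ~ sigma_ A c P)).
  { intros c h. destruct (Hdec (sigma_ A c)); tauto. }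
  split; [| split; [| split; [| split]]].
  - apply NNPP. intro h. apply (refute [fun P => ~ sigma_ A (wone A) P]).
    + intros φ [<- | []]. apply Hneg, h.
    + intros m hm. apply (hm _ (or_introl eq_refl)), (proj2_sig m).
  - intro h. apply (refute [sigma_ A (wzero A)]).
    + intros φ [<- | []]. exact h.
    + intros m hm. apply (proj2_sig m), (hm _ (or_introl eq_refl)).
  - intros a b ha hb. apply NNPP. intro h.
    apply (refute [sigma_ A a; sigma_ A b; fun P => ~ sigma_ A (wmeet A a b) P]).
    + intros φ [<- | [<- | [<- | []]]]; auto.
    + intros m hm. apply (hm _ (or_intror (or_intror (or_introl eq_refl)))).
      apply (prime_filter_meet Hl _ (proj2_sig m)). split; apply hm; simpl; auto.
  - intros a b ha hab. apply NNPP. intro h.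
    apply (refute [sigma_ A a; fun P => ~ sigma_ A b P]).
    + intros φ [<- | [<- | []]]; auto.
    + intros m hm. apply (hm _ (or_intror (or_introl eq_refl))).
      apply (prime_filter_le _ (proj2_sig m) a); [apply hm; left |]; auto.
  - intros a b hab. apply NNPP. intro h.
    apply (refute [sigma_ A (wjoin A a b); fun P => ~ sigma_ A a P; fun P => ~ sigma_ A b P]).
    + intros φ [<- | [<- | [<- | []]]]; auto; apply Hneg; tauto.
    + intros m hm. assert (hj := hm _ (or_introl eq_refl)).
      apply (prime_filter_join Hl _ (proj2_sig m)) in hj. destruct hj as [hj | hj].
      * exact (hm _ (or_intror (or_introl eq_refl)) hj).
      * exact (hm _ (or_intror (or_intror (or_introl eq_refl))) hj).
Qed.

(* [X A] is compact for the topology [openA A], of which the sets [basic a b] form a base. *)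
Lemma patch_compact {A : WSig} (Hl : is_bdl (wmeet A) (wjoin A) (wzero A) (wone A))
    (C : A -> A -> Prop) :
  (forall P : X A, exists a b, C a b /\ basic a b P) ->
  exists l : list (A * A), (forall x, In x l -> C (fst x) (snd x)) /\
    forall P : X A, exists x, In x l /\ basic (fst x) (snd x) P.
Proof.
  intros Hcov. apply NNPP. intro Hno.
  set (avoids := fun (φ : X A -> Prop) x =>
         C (fst x) (snd x) /\ φ = (fun P => ~ basic (fst x) (snd x) P)).
  set (Γ0 := fun φ => exists x, avoids φ x).
  assert (H0 : finitely_satisfiable Γ0).
  { intros l. apply NNPP. intro Hl'.
    destruct (list_choice Γ0 avoids l) as [l' [H1 H2]]; [intros φ [x Hx]; exists x; exact Hx |].
    apply Hno. exists l'. split; [intros y hy; destruct (H1 y hy) as (_ & _ & h & _); exact h |].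
    intros P. apply NNPP. intro HP. apply Hl'. exists P. intros φ hφ Hφ. apply NNPP. intro hn.
    destruct (H2 φ hφ Hφ) as (x & hx & _ & ->). apply HP. exists x. split; [exact hx | tauto]. }
  destruct (lindenbaum Γ0 H0) as (Γ & HΓ0 & HΓ & Hdec).
  destruct (Hcov (exist _ _ (decided_prime_filter Hl Γ HΓ Hdec))) as (a & b & Cab & Pa & Pb).
  destruct (finitely_satisfiable_model Γ
              [sigma_ A a; fun P => ~ sigma_ A b P; fun P => ~ basic a b P] HΓ) as [m hm].
  - intros φ [<- | [<- | [<- | []]]]; [exact Pa | destruct (Hdec (sigma_ A b)); tauto |].
    apply HΓ0. exists (a, b). split; [exact Cab | reflexivity].
  - apply (hm _ (or_intror (or_intror (or_introl eq_refl)))).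
    split; [apply hm; left; reflexivity | apply (hm _ (or_intror (or_introl eq_refl)))].
Qed.

Section Clopens.
Context {A : WSig}.

Lemma open_ext (U V : X A -> Prop) : (forall P, U P <-> V P) -> openA A U -> openA A V.
Proof. intros h hU. apply pred_ext in h. subst. exact hU. Qed.

Lemma clopen_ext (U V : X A -> Prop) : (forall P, U P <-> V P) -> clopenA A U -> clopenA A V.
Proof. intros h hU. apply pred_ext in h. subst. exact hU. Qed.

Lemma open_and (U V : X A -> Prop) : openA A U -> openA A V -> openA A (fun P => U P /\ V P).
Proof.
  intros hU hV P [hu hv].
  destruct (hU P hu) as [l1 [a1 b1]], (hV P hv) as [l2 [a2 b2]].
  exists (l1 ++ l2). split.
  - intros s hs. apply in_app_or in hs. destruct hs; auto.
  - intros Q hQ. split; [apply b1 | apply b2]; intros s hs; apply hQ, in_or_app; auto.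
Qed.

Lemma open_or (U V : X A -> Prop) : openA A U -> openA A V -> openA A (fun P => U P \/ V P).
Proof.
  intros hU hV P [hu | hv].
  - destruct (hU P hu) as [l [a b]]. exists l. split; [exact a | intros Q hQ; left; auto].
  - destruct (hV P hv) as [l [a b]]. exists l. split; [exact a | intros Q hQ; right; auto].
Qed.

Lemma clopen_neg (U : X A -> Prop) : clopenA A U -> clopenA A (fun P => ~ U P).
Proof.
  intros [h1 h2]. split; [exact h2 |].
  apply open_ext with U; [intro P; tauto | exact h1].
Qed.

Lemma clopen_and (U V : X A -> Prop) : clopenA A U -> clopenA A V -> clopenA A (fun P => U P /\ V P).
Proof.
  intros [u1 u2] [v1 v2]. split; [apply open_and; auto |].
  apply open_ext with (fun P => ~ U P \/ ~ V P); [intro P; tauto | apply open_or; auto].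
Qed.

Lemma clopen_or (U V : X A -> Prop) : clopenA A U -> clopenA A V -> clopenA A (fun P => U P \/ V P).
Proof.
  intros [u1 u2] [v1 v2]. split; [apply open_or; auto |].
  apply open_ext with (fun P => ~ U P /\ ~ V P); [intro P; tauto | apply open_and; auto].
Qed.

Lemma clopen_full : clopenA A (fun _ => True).
Proof. apply clopen_ext with (fun P => ~ False); [tauto | apply clopen_neg, clopen_empty]. Qed.

Lemma clopen_sigma a : clopenA A (sigma_ A a).
Proof.
  split; intros P h; [exists [(true, a)] | exists [(false, a)]];
    (split; [intros s [<- | []]; exact h | intros Q hQ; exact (hQ _ (or_introl eq_refl))]).
Qed.

Lemma clopen_all {I : Type} (l : list I) (U : I -> X A -> Prop) :
  (forall x, In x l -> clopenA A (U x)) -> clopenA A (fun P => forall x, In x l -> U x P).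
Proof.
  induction l as [| a l IH]; intros h.
  - apply clopen_ext with (fun _ => True); [| apply clopen_full].
    intros P. split; [intros _ x [] | auto].
  - apply clopen_ext with (fun P => U a P /\ forall x, In x l -> U x P).
    + intros P. split; [intros [h1 h2] x [<- | hx]; auto |].
      intros h1. split; [apply h1; left | intros x hx; apply h1; right]; auto.
    + apply clopen_and; [apply h; left | apply IH; intros x hx; apply h; right]; auto.
Qed.

Context (Hl : is_bdl (wmeet A) (wjoin A) (wzero A) (wone A)).

Lemma subbasic_list_basic (ls : list (bool * A)) :
  exists a b, forall P : X A, (forall s, In s ls -> subb A s P) <-> basic a b P.
Proof.
  unfold basic. induction ls as [| [[|] c] ls [a [b IH]]].
  - exists (wone A), (wzero A). intros P. split; [intros _ | intros _ s []].
    split; [apply (proj2_sig P) | apply (proj2_sig P)].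
  - exists (wmeet A a c), b. intros P. rewrite (prime_filter_meet Hl _ (proj2_sig P)). split.
    + intros hs. assert (h1 := proj1 (IH P) (fun s hs' => hs s (or_intror hs'))).
      assert (h2 := hs (true, c) (or_introl eq_refl)). unfold subb, sigma_ in h2; simpl in h2. tauto.
    + intros [[h1 h2] h3] s [<- | hs]; [exact h2 | apply (proj2 (IH P)); auto].
  - exists a, (wjoin A b c). intros P. rewrite (prime_filter_join Hl _ (proj2_sig P)). split.
    + intros hs. assert (h1 := proj1 (IH P) (fun s hs' => hs s (or_intror hs'))).
      assert (h2 := hs (false, c) (or_introl eq_refl)). unfold subb, sigma_ in h2; simpl in h2. tauto.
    + intros [h1 h2] s [<- | hs]; [unfold subb, sigma_; simpl; tauto | apply (proj2 (IH P)); tauto].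
Qed.

Definition impl_set (a b : A) (P : X A) : Prop := proj1_sig P a -> proj1_sig P b.

Lemma clopen_impl_decomposition (U : X A -> Prop) :
  clopenA A U ->
  exists l : list (A * A), forall P, U P <-> forall x, In x l -> impl_set (fst x) (snd x) P.
Proof.
  intros [hU hnU].
  set (inside := fun a b => forall P, basic a b P -> U P).
  set (outside := fun a b => forall P, basic a b P -> ~ U P).
  destruct (patch_compact Hl (fun a b => inside a b \/ outside a b)) as [l [Hin Hcov]].
  - intros P. destruct (classic (U P)) as [h | h];
      [destruct (hU P h) as [ls [h1 h2]] | destruct (hnU P h) as [ls [h1 h2]]];
      destruct (subbasic_list_basic ls) as [a [b hab]]; exists a, b;
      (split; [| apply (hab P), h1]); [left | right]; intros Q hQ; apply h2, hab, hQ.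
  - destruct (list_choice (fun x => outside (fst x) (snd x)) eq l) as [l' [H1 H2]];
      [intros x _; exists x; reflexivity |].
    exists l'. intros P. split.
    + intros hP x hx ha. apply NNPP. intro hb.
      destruct (H1 x hx) as [y [Hy ->]]. exact (Hy P (conj ha hb) hP).
    + intros hP. destruct (Hcov P) as [x [hx hPx]].
      destruct (Hin x hx) as [h | h]; [exact (h P hPx) |].
      destruct (H2 x hx h) as [y [hy <-]]. exfalso. apply hPx, (hP x hy), hPx.
Qed.

End Clopens.

Section Successors.
Context {A : WSig} (Hw : is_WHB A).
Let Hl := proj1 Hw.

Lemma GA_impl_set a b (P : X A) : GA A (impl_set a b) P <-> proj1_sig P (wimp A a b).
Proof.
  split.
  - intros hG. apply NNPP. intro hn.
    destruct (RA_witness Hw P a b hn) as (Q & HR & Qa & Qb). exact (Qb (hG Q HR Qa)).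
  - intros hP Q hR. exact (hR a b hP).
Qed.

Lemma HA_impl_set a b (P : X A) : HA A (impl_set a b) P <-> ~ proj1_sig P (wcoimp A a b).
Proof.
  split.
  - intros hH hn. destruct (SA_witness Hw P a b hn) as (Q & HS & Qa & Qb). exact (Qb (hH Q HS Qa)).
  - intros hP Q hS ha. apply NNPP. intro hb. exact (hP (hS a b ha hb)).
Qed.

Lemma GA_clopen (U : X A -> Prop) : clopenA A U -> clopenA A (GA A U).
Proof.
  intros hU. destruct (clopen_impl_decomposition Hl U hU) as [l hl].
  apply clopen_ext with (fun P => forall x, In x l -> sigma_ A (wimp A (fst x) (snd x)) P).
  - intros P. split.
    + intros h Q hR. apply hl. intros x hx. exact (proj2 (GA_impl_set _ _ P) (h x hx) Q hR).
    + intros hG x hx. apply GA_impl_set. intros Q hR. exact (proj1 (hl Q) (hG Q hR) x hx).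
  - apply clopen_all. intros x _. apply clopen_sigma.
Qed.

Lemma HA_clopen (U : X A -> Prop) : clopenA A U -> clopenA A (HA A U).
Proof.
  intros hU. destruct (clopen_impl_decomposition Hl U hU) as [l hl].
  apply clopen_ext with (fun P => forall x, In x l -> ~ sigma_ A (wcoimp A (fst x) (snd x)) P).
  - intros P. split.
    + intros h Q hS. apply hl. intros x hx. exact (proj2 (HA_impl_set _ _ P) (h x hx) Q hS).
    + intros hH x hx. apply HA_impl_set. intros Q hS. exact (proj1 (hl Q) (hH Q hS) x hx).
  - apply clopen_all. intros x _. apply clopen_neg, clopen_sigma.
Qed.

End Successors.

Lemma mk_clop_val (A : WSig) (U : X A -> Prop) : clopenA A U -> proj1_sig (mk_clop A U) = U.
Proof.
  intro h. unfold mk_clop.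
  destruct (excluded_middle_informative (clopenA A U)); [reflexivity | contradiction].
Qed.

Lemma clop_eq {A : WSig} (U V : Clop A) : (forall P, proj1_sig U P <-> proj1_sig V P) -> U = V.
Proof.
  destruct U as [U hU], V as [V hV]. simpl. intro h.
  apply pred_ext in h. subst V. f_equal. apply proof_irrelevance.
Qed.

Section TOperations.
Context {A : WSig}.

Lemma T_meetE (U V : Clop A) : proj1_sig (tmeet (T A) U V) = fun P => proj1_sig U P /\ proj1_sig V P.
Proof. apply mk_clop_val, clopen_and; apply proj2_sig. Qed.

Lemma T_joinE (U V : Clop A) : proj1_sig (tjoin (T A) U V) = fun P => proj1_sig U P \/ proj1_sig V P.
Proof. apply mk_clop_val, clopen_or; apply proj2_sig. Qed.

Lemma T_negE (U : Clop A) : proj1_sig (tneg (T A) U) = fun P => ~ proj1_sig U P.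
Proof. apply mk_clop_val, clopen_neg, proj2_sig. Qed.

Lemma T_zeroE : proj1_sig (tzero (T A)) = fun _ => False.
Proof. apply mk_clop_val, clopen_empty. Qed.

Lemma T_oneE : proj1_sig (tone (T A)) = fun _ => True.
Proof. apply mk_clop_val, clopen_full. Qed.

Context (Hw : is_WHB A).

Lemma T_GE (U : Clop A) : proj1_sig (tG (T A) U) = GA A (proj1_sig U).
Proof. apply mk_clop_val, (GA_clopen Hw), proj2_sig. Qed.

Lemma T_HE (U : Clop A) : proj1_sig (tH (T A) U) = HA A (proj1_sig U).
Proof. apply mk_clop_val, (HA_clopen Hw), proj2_sig. Qed.

Definition sigma_clop (a : A) : Clop A := exist _ (sigma_ A a) (clopen_sigma a).

Lemma sigma_clop_whom : whom A (M (T A)) sigma_clop.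
Proof.
  assert (Hl := proj1 Hw).
  split; [| split; [| split; [| split; [| split]]]]; intros; apply clop_eq; intros P;
    cbn [M wmeet wjoin wimp wcoimp wzero wone]; unfold tP.
  - rewrite T_meetE. apply (prime_filter_meet Hl _ (proj2_sig P)).
  - rewrite T_joinE. apply (prime_filter_join Hl _ (proj2_sig P)).
  - rewrite T_GE, T_joinE, T_negE. cbn [sigma_clop proj1_sig].
    replace (fun Q => ~ sigma_ A a Q \/ sigma_ A b Q) with (impl_set a b)
      by (apply pred_ext; intro Q; unfold impl_set, sigma_; tauto).
    symmetry. apply (GA_impl_set Hw).
  - rewrite T_negE, T_HE, T_negE, T_meetE, T_negE. cbn [sigma_clop proj1_sig].
    replace (fun Q => ~ (sigma_ A a Q /\ ~ sigma_ A b Q)) with (impl_set a b)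
      by (apply pred_ext; intro Q; unfold impl_set, sigma_; tauto).
    rewrite (HA_impl_set Hw). unfold sigma_. simpl. tauto.
  - rewrite T_zeroE. split; [apply (proj2_sig P) | intros []].
  - rewrite T_oneE. split; [intros _; exact I | intros _; apply (proj2_sig P)].
Qed.

Lemma sigma_clop_injective : injective sigma_clop.
Proof.
  assert (Hl := proj1 Hw).
  assert (Hle : forall a b, sigma_clop a = sigma_clop b -> wle A a b).
  { intros a b e. apply NNPP. intro hn.
    destruct (prime_filter_theorem Hl a b hn) as (Q & Qa & Qb).
    apply (f_equal (fun U => proj1_sig U Q)) in e. simpl in e. unfold sigma_ in e.
    rewrite e in Qa. exact (Qb Qa). }
  intros a b e. apply (le_anti Hl); apply Hle; auto.
Qed.

End TOperations.

Lemma X_eq {A : WSig} (P Q : X A) : (forall a, proj1_sig P a <-> proj1_sig Q a) -> P = Q.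
Proof.
  destruct P as [P hP], Q as [Q hQ]. simpl. intro h.
  apply pred_ext in h. subst Q. f_equal. apply proof_irrelevance.
Qed.

Section DualMap.
Context {A B : WSig} (i : A -> B) (Hi : whom A B i).

Lemma Xmap_RA (P' Q' : X B) : RA B P' Q' -> RA A (Xmap i Hi P') (Xmap i Hi Q').
Proof.
  pose proof Hi as (_ & _ & iimp & _). intros hR a b. simpl. rewrite iimp. apply hR.
Qed.

Lemma Xmap_SA (P' Q' : X B) : SA B P' Q' -> SA A (Xmap i Hi P') (Xmap i Hi Q').
Proof.
  pose proof Hi as (_ & _ & _ & icoimp & _). intros hS a b. simpl. rewrite icoimp. apply hS.
Qed.

Lemma clopen_preimage (U : X A -> Prop) : clopenA A U -> clopenA B (fun P' => U (Xmap i Hi P')).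
Proof.
  assert (Hopen : forall V, openA A V -> openA B (fun P' => V (Xmap i Hi P'))).
  { intros V hV P' hP. destruct (hV _ hP) as [l [h1 h2]].
    exists (map (fun s => (fst s, i (snd s))) l). split.
    - intros s hs. apply in_map_iff in hs. destruct hs as [[b a] [<- hs]]. exact (h1 _ hs).
    - intros Q' hQ. apply h2. intros [b a] hs. apply (hQ (b, i a)), in_map_iff.
      exists (b, a). auto. }
  intros [h1 h2]. split; [apply Hopen, h1 | apply (Hopen (fun P => ~ U P)), h2].
Qed.

Definition Tmap (U : Clop A) : Clop B := mk_clop B (fun P' => proj1_sig U (Xmap i Hi P')).

Lemma TmapE (U : Clop A) : proj1_sig (Tmap U) = fun P' => proj1_sig U (Xmap i Hi P').
Proof. apply mk_clop_val, clopen_preimage, proj2_sig. Qed.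

Lemma Tmap_sigma_clop (a : A) : Tmap (sigma_clop a) = sigma_clop (i a).
Proof. apply clop_eq. intros P'. rewrite TmapE. reflexivity. Qed.

Context (HwA : is_WHB A) (HwB : is_WHB B).

Lemma GA_Xmap (U : X A -> Prop) (P' : X B) :
  GA A U (Xmap i Hi P') <-> GA B (fun Q' => U (Xmap i Hi Q')) P'.
Proof.
  split.
  - intros hG Q' hR. apply hG, Xmap_RA, hR.
  - intros hG Q hR. destruct (RA_lift i Hi HwA HwB P' Q hR) as (Q' & hR' & hQ').
    replace Q with (Xmap i Hi Q') by (apply X_eq; exact hQ'). apply hG, hR'.
Qed.

Lemma HA_Xmap (U : X A -> Prop) (P' : X B) :
  HA A U (Xmap i Hi P') <-> HA B (fun Q' => U (Xmap i Hi Q')) P'.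
Proof.
  split.
  - intros hH Q' hS. apply hH, Xmap_SA, hS.
  - intros hH Q hS. destruct (SA_lift i Hi HwA HwB P' Q hS) as (Q' & hS' & hQ').
    replace Q with (Xmap i Hi Q') by (apply X_eq; exact hQ'). apply hH, hS'.
Qed.

Lemma Tmap_thom : thom (T A) (T B) Tmap.
Proof.
  split; [| split; [| split; [| split; [| split; [| split]]]]]; intros; apply clop_eq; intros P';
    rewrite TmapE.
  - rewrite !T_meetE, !TmapE. reflexivity.
  - rewrite !T_joinE, !TmapE. reflexivity.
  - rewrite !T_negE, !TmapE. reflexivity.
  - rewrite !T_zeroE. reflexivity.
  - rewrite !T_oneE. reflexivity.
  - rewrite (T_GE HwA), (T_GE HwB), TmapE. apply GA_Xmap.
  - rewrite (T_HE HwA), (T_HE HwB), TmapE. apply HA_Xmap.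
Qed.

Lemma Tmap_injective : injective i -> injective Tmap.
Proof.
  intros Hinj U V e. apply clop_eq. intros P.
  destruct (prime_filter_lift i Hi HwB P Hinj) as [P' HP'].
  replace P with (Xmap i Hi P') by (apply X_eq; exact HP').
  apply (f_equal (fun W => proj1_sig W P')) in e. rewrite !TmapE in e. rewrite e. reflexivity.
Qed.

End DualMap.

Section TenseAlgebra.
Context {B : TSig} (Ht : is_tense B).
Let Hl : is_bdl (wmeet (M B)) (wjoin (M B)) (wzero (M B)) (wone (M B)) := proj1 Ht.

Lemma neg_unique x y : tmeet B x y = tzero B -> tjoin B x y = tone B -> y = tneg B x.
Proof. intros h1 h2. apply (complement_unique Hl x); [exact h1 | exact h2 | apply Ht | apply Ht]. Qed.

Lemma negK x : tneg B (tneg B x) = x.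
Proof.
  symmetry. apply neg_unique.
  - exact (eq_trans (meetC Hl _ _) (proj1 (proj2 Ht) x)).
  - exact (eq_trans (joinC Hl _ _) (proj1 (proj2 (proj2 Ht)) x)).
Qed.

Lemma neg1 : tneg B (tone B) = tzero B.
Proof.
  symmetry. apply neg_unique; [apply (eq_trans (meetC Hl _ _) (meetx1 Hl _)) | apply (joinx0 Hl)].
Qed.

Lemma neg0 : tneg B (tzero B) = tone B.
Proof.
  symmetry. apply neg_unique; [apply (meetx1 Hl) | apply (eq_trans (joinC Hl _ _) (joinx0 Hl _))].
Qed.

Lemma G_as_imp x : tG B x = wimp (M B) (wone (M B)) x.
Proof. simpl. rewrite neg1. f_equal. symmetry. apply (eq_trans (joinC Hl _ _) (joinx0 Hl _)). Qed.

Lemma H_as_coimp x : tH B x = tneg B (wcoimp (M B) (tneg B x) (wzero (M B))).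
Proof.
  simpl. unfold tP. rewrite neg0.
  replace (tmeet B (tneg B x) (tone B)) with (tneg B x) by (symmetry; apply (meetx1 Hl)).
  rewrite !negK. reflexivity.
Qed.

End TenseAlgebra.

Lemma thom_whom_M {B C : TSig} (f : B -> C) : thom B C f -> whom (M B) (M C) f.
Proof.
  intros (fm & fj & fn & fz & fo & fG & fH).
  split; [| split; [| split; [| split; [| split]]]]; simpl; intros; unfold tP;
    repeat rewrite ?fm, ?fj, ?fn, ?fz, ?fo, ?fG, ?fH; reflexivity.
Qed.

Lemma whom_M_thom {B C : TSig} (HtB : is_tense B) (HtC : is_tense C) (f : B -> C) :
  whom (M B) (M C) f -> thom B C f.
Proof.
  intros (fm & fj & fi & fc & fz & fo). simpl in *.
  assert (fn : forall a, f (tneg B a) = tneg C (f a)).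
  { intros a. apply (neg_unique HtC).
    - rewrite <- fm, (proj1 (proj2 HtB)). exact fz.
    - rewrite <- fj, (proj1 (proj2 (proj2 HtB))). exact fo. }
  split; [| split; [| split; [| split; [| split; [| split]]]]]; auto; intros a.
  - rewrite (G_as_imp HtB), (G_as_imp HtC). simpl. rewrite fi, fo. reflexivity.
  - rewrite (H_as_coimp HtB), (H_as_coimp HtC). simpl. rewrite fn, fc, fn, fz. reflexivity.
Qed.

Lemma whom_comp {A B C : WSig} (f : A -> B) (g : B -> C) :
  whom A B f -> whom B C g -> whom A C (fun x => g (f x)).
Proof.
  intros (fm & fj & fi & fc & fz & fo) (gm & gj & gi & gc & gz & go).
  split; [| split; [| split; [| split; [| split]]]]; intros;
    repeat rewrite ?fm, ?fj, ?fi, ?fc, ?fz, ?fo, ?gm, ?gj, ?gi, ?gc, ?gz, ?go; reflexivity.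
Qed.

Lemma injective_comp {X1 X2 X3 : Type} (f : X1 -> X2) (g : X2 -> X3) :
  injective f -> injective g -> injective (fun x => g (f x)).
Proof. intros hf hg x y e. apply hf, hg, e. Qed.

Lemma embedding_into_T {B : TSig} {D : WSig} (HtB : is_tense B) (HwD : is_WHB D)
    (HtD : is_tense (T D)) (h : M B -> D) :
  whom (M B) D h -> injective h ->
  thom B (T D) (fun x => sigma_clop (h x)) /\ injective (fun x => sigma_clop (h x)).
Proof.
  intros hh ih. split.
  - apply whom_M_thom; [exact HtB | exact HtD |].
    apply (whom_comp h); [exact hh | apply (sigma_clop_whom HwD)].
  - apply injective_comp; [exact ih | apply (sigma_clop_injective HwD)].
Qed.

Lemma embedding_through_T {A : WSig} {D : TSig} (HwA : is_WHB A) (h : T A -> D) :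
  thom (T A) D h -> injective h ->
  whom A (M D) (fun x => h (sigma_clop x)) /\ injective (fun x => h (sigma_clop x)).
Proof.
  intros hh ih. split.
  - apply (whom_comp (B := M (T A)) sigma_clop); [apply (sigma_clop_whom HwA) | apply thom_whom_M, hh].
  - apply injective_comp; [apply (sigma_clop_injective HwA) | exact ih].
Qed.

Theorem theorem6p25 (K : WSig -> Prop) (N : TSig -> Prop) :
  whb_variety K -> tense_variety N -> tense_companion K N ->
  (w_amalgamation K <-> t_amalgamation N).
Proof.
  intros [? HK] [? HN] [KN NK].
  assert (KW : forall A, K A -> is_WHB A) by (intros A h; apply HK in h; apply h).
  assert (NT : forall B, N B -> is_tense B) by (intros B h; apply HN in h; apply h).
  split.
  - intros wam A B C i j nA nB nC hi ii hj ij.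
    destruct (wam (M A) (M B) (M C) i j (NK A nA) (NK B nB) (NK C nC)
                (thom_whom_M i hi) ii (thom_whom_M j hj) ij)
      as (D & h & k & kD & hh & ih & hk & ik & comm).
    destruct (embedding_into_T (NT B nB) (KW D kD) (NT _ (KN D kD)) h hh ih) as [hh' ih'].
    destruct (embedding_into_T (NT C nC) (KW D kD) (NT _ (KN D kD)) k hk ik) as [hk' ik'].
    exists (T D), (fun x => sigma_clop (h x)), (fun x => sigma_clop (k x)).
    split; [apply KN, kD | repeat (split; [assumption |])].
    intros a. rewrite comm. reflexivity.
  - intros tam A B C i j kA kB kC hi ii hj ij.
    assert (HwA := KW A kA). assert (HwB := KW B kB). assert (HwC := KW C kC).
    destruct (tam (T A) (T B) (T C) (Tmap i hi) (Tmap j hj) (KN A kA) (KN B kB) (KN C kC)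
                (Tmap_thom i hi HwA HwB) (Tmap_injective i hi HwB ii)
                (Tmap_thom j hj HwA HwC) (Tmap_injective j hj HwC ij))
      as (D & h & k & nD & hh & ih & hk & ik & comm).
    destruct (embedding_through_T HwB h hh ih) as [hh' ih'].
    destruct (embedding_through_T HwC k hk ik) as [hk' ik'].
    exists (M D), (fun x => h (sigma_clop x)), (fun x => k (sigma_clop x)).
    split; [apply NK, nD | repeat (split; [assumption |])].
    intros a. rewrite <- (Tmap_sigma_clop i hi), <- (Tmap_sigma_clop j hj). apply comm.
Qed.
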